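(* The monic irreducible polynomials over the sign hyperfield $\mathbb S$ are exactly $T$, $T-1$, $T+1$ and $T^2+1$. Consequently every irreducible polynomial over $\mathbb S$ is $\pm$ one of these.
   Context: The sign hyperfield $\mathbb S$ is $\{0,1,-1\}$ with the usual multiplication and hyperaddition $0\boxplus a=\{a\}$, $1\boxplus1=\{1\}$, $(-1)\boxplus(-1)=\{-1\}$, $1\boxplus(-1)=\{0,1,-1\}$. Iterated sums: $\boxplus_{i=1}^n a_i=\bigcup_{b\in\boxplus_{i=1}^{n-1}a_i} b\boxplus a_n$. A polynomial over $\mathbb S$ is a finitely supported sequence $(c_i)$ in $\mathbb S$, written $\sum c_iT^i$, of degree the largest $k$ with $c_k\ne0$; monic means $c_{\deg p}=1$. Hyperproduct: $p\boxdot q=\{\sum e_iT^i : e_i\in \boxplus_{k+l=i} c_kd_l\}$. $p\sim q$ means $p\in a\boxdot q$ for some $a\in\{\pm1\}$. $p$ is irreducible if $\deg p\ge1$ and $p\in q_1\boxdot q_2$ implies $p\sim q_1$ or $p\sim q_2$. *)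

From HB Require Import structures.
From mathcomp Require Import all_boot.
Set Implicit Arguments. Unset Strict Implicit. Unset Printing Implicit Defensive.

(** The sign hyperfield S = {0, 1, -1}: Z = 0, P = 1, N = -1. *)
Inductive sgn := Z | P | N.

Definition sgn_eqb (a b : sgn) : bool :=
  match a, b with Z, Z | P, P | N, N => true | _, _ => false end.
Lemma sgn_eqP : Equality.axiom sgn_eqb.
Proof. by case; case; constructor. Qed.
HB.instance Definition _ := hasDecEq.Build sgn sgn_eqP.

Definition smul (a b : sgn) : sgn :=
  match a, b with
  | Z, _ | _, Z => Z
  | P, x => x
  | N, P => N
  | N, N => P
  end.

(** hyperaddition: [hadd a b x] iff x \in a (+) b *)
Definition hadd (a b : sgn) (x : sgn) : bool :=
  match a, b with
  | Z, y => x == y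
  | y, Z => x == y
  | P, P => x == P
  | N, N => x == N
  | _, _ => true
  end.

(** iterated hypersum a_1 (+) ... (+) a_n, as a predicate on sgn, computed
    left to right: start from {0} (so that 0 (+) a_1 = {a_1}) and
    successively take the union over b in the partial sum of b (+) a_k. *)
Definition hsum_step (A : sgn -> bool) (a : sgn) : sgn -> bool :=
  fun x => has (fun b => A b && hadd b a x) [:: Z; P; N].
Definition hsum (s : seq sgn) : sgn -> bool := foldl hsum_step (pred1 Z) s.

(** Polynomials over S: finitely supported coefficient sequences, represented
    canonically by their coefficient list with nonzero last entry. *)
Definition spoly := {s : seq sgn | last Z s != Z}.
Definition coef (p : spoly) (i : nat) : sgn := nth Z (val p) i.

Definition deg (p : spoly) : nat := (size (val p)).-1.
Definition monic (p : spoly) : Prop := coef p (deg p) = P.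

(** hyperproduct: e \in p [.] q *)
Definition in_hprod (e p q : spoly) : Prop :=
  forall i : nat,
    hsum [seq smul (coef p k) (coef q (i - k)) | k <- iota 0 i.+1] (coef e i).

Definition mkpoly (s : seq sgn) (H : last Z s != Z) : spoly := exist _ s H.

Definition pone : spoly := @mkpoly [:: P] isT.
Definition pmone : spoly := @mkpoly [:: N] isT.
Definition pT : spoly := @mkpoly [:: Z; P] isT.
Definition pTm1 : spoly := @mkpoly [:: N; P] isT.
Definition pTp1 : spoly := @mkpoly [:: P; P] isT.
Definition pT2p1 : spoly := @mkpoly [:: P; Z; P] isT.

Definition assoc (p q : spoly) : Prop := in_hprod p pone q \/ in_hprod p pmone q.

Definition irreducible (p : spoly) : Prop :=
  1 <= deg p /\
  forall q1 q2 : spoly, in_hprod p q1 q2 -> assoc p q1 \/ assoc p q2.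

From mathcomp Require Import all_boot zify.
Set Implicit Arguments. Unset Strict Implicit. Unset Printing Implicit Defensive.

(* A hypersum a_1 (+) ... (+) a_n depends only on which of the signs 1, -1
   occur among the a_i (lemma [hsumE]); everything else is built on this.
   From it we get that degrees add under the hyperproduct ([deg_hprod]), so a
   polynomial is irreducible as soon as it has positive degree and admits no
   factorisation into two factors of positive degree.  Conversely, every
   polynomial of degree n >= 3 has such a factorisation, with one factor among
   T, T - 1, T + 1 and T^2 + T + 1, chosen according to c_0, the sign of c_n
   relative to c_0 and the parity of n; the cofactor has constant or
   alternating signs.  Polynomials of degree at most 2 are treated by a finite
   computation, through a boolean test [checks] reflecting membership in a
   hyperproduct. *)

Definition neg (x : sgn) : sgn := smul N x.

Lemma smulC x y : smul x y = smul y x. Proof. by case: x; case: y. Qed.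
Lemma smulx0 x : smul x Z = Z. Proof. by case: x. Qed.
Lemma smul_neq0 x y : x != Z -> y != Z -> smul x y != Z.
Proof. by case: x; case: y. Qed.

Definition sign_span (hasP hasN : bool) (x : sgn) : bool :=
  if hasP && hasN then true else x == (if hasP then P else if hasN then N else Z).

Lemma hsumE s x : hsum s x = sign_span (P \in s) (N \in s) x.
Proof.
elim/last_ind: s x => [|s a IH] x //.
rewrite /hsum foldl_rcons -/(hsum s) /hsum_step /= !IH !mem_rcons !in_cons.
by case: (P \in s); case: (N \in s); case: a; case: x.
Qed.

Lemma hsum_eq s t :
  (forall x, x != Z -> (x \in s) = (x \in t)) -> forall y, hsum s y = hsum t y.
Proof. by move=> st y; rewrite !hsumE !st. Qed.

Lemma hsum_full s y : P \in s -> N \in s -> hsum s y.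
Proof. by rewrite hsumE => -> ->. Qed.

Lemma coef_deg_neq0 p : coef p (deg p) != Z.
Proof. by case: p => [[|a s] h] //; rewrite /coef /deg (nth_last Z (a :: s)). Qed.

Lemma coef_deg_last p : coef p (deg p) = last Z (val p).
Proof. by case: p => [[|a s] h] //; rewrite /coef /deg (nth_last Z (a :: s)). Qed.

Lemma deg_lt_size p : deg p < size (val p).
Proof. by case: p => [[|a s] h]. Qed.

Lemma coef_gt p i : deg p < i -> coef p i = Z.
Proof. by case: p => [[|a s] h] //; rewrite /coef /deg => hi; apply: nth_default. Qed.

Lemma coef_neq0_le p i : coef p i != Z -> i <= deg p.
Proof. by apply: contraR; rewrite -ltnNge => /coef_gt ->. Qed.

Lemma deg_char p d :
  coef p d != Z -> (forall i, d < i -> coef p i = Z) -> deg p = d.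
Proof.
move=> pd pgt; case: (ltngtP (deg p) d) => // hd.
- by rewrite coef_gt in pd.
- by move: (coef_deg_neq0 p); rewrite pgt.
Qed.

Lemma deg0 q : deg q = 0 -> q = pone \/ q = pmone.
Proof.
case: q => [[|a [|b s]] h] // _.
by case: a h => // h; [left | right]; apply: val_inj.
Qed.

Definition hterms (p q : spoly) (i : nat) : seq sgn :=
  [seq smul (coef p k) (coef q (i - k)) | k <- iota 0 i.+1].

Lemma hterms_support p q i x : x != Z -> x \in hterms p q i ->
  exists2 k, k <= deg p /\ i - k <= deg q & x = smul (coef p k) (coef q (i - k)).
Proof.
move=> x0 /mapP [k _ ex]; exists k => //.
move: x0; rewrite ex; case: (coef p k =P Z) => [-> //| /eqP pk].
case: (coef q (i - k) =P Z) => [->|/eqP qk _]; first by rewrite smulx0.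
by split; exact: coef_neq0_le.
Qed.

(* Degrees add under the hyperproduct: in degree deg p + deg q the only
   nonzero summand is the product of the leading coefficients, and in higher
   degrees all summands vanish. *)
Lemma deg_hprod e p q : in_hprod e p q -> deg e = deg p + deg q.
Proof.
move=> epq; apply: deg_char.
- set v := smul (coef p (deg p)) (coef q (deg q)).
  have v0 : v != Z by apply: smul_neq0; apply: coef_deg_neq0.
  have top : forall x, x != Z -> (x \in hterms p q (deg p + deg q)) = (x \in [:: v]).
    move=> x x0; rewrite mem_seq1; apply/idP/eqP => [|->].
      case/(hterms_support x0) => k [kp kq] ->.
      have -> : k = deg p by lia.
      by rewrite addKn.
    by apply/mapP; exists (deg p); rewrite ?mem_iota ?addKn //; lia.
  move: (epq (deg p + deg q)); rewrite (hsum_eq top) hsumE.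
  by clear top; move: v0; case: v => //= _ /eqP ->.
- move=> i hi; move: (epq i); rewrite (@hsum_eq _ [::]) => [/eqP //|x x0].
  by apply/negP => /(hterms_support x0) [k [kp kq] _]; lia.
Qed.

Lemma in_hprodC e p q : in_hprod e p q -> in_hprod e q p.
Proof.
have sub p' q' i x : x \in hterms p' q' i -> x \in hterms q' p' i.
  case/mapP => k; rewrite mem_iota => ki ->; apply/mapP; exists (i - k).
    by rewrite mem_iota; lia.
  by rewrite smulC subKn //; lia.
move=> epq i; rewrite -(@hsum_eq (hterms p q i)); first exact: epq.
by move=> x _; apply/idP/idP; apply: sub.
Qed.

(* A decision procedure for membership in a hyperproduct: only the indices
   below the sizes involved can fail. *)
Definition checks (es : seq sgn) (p q : spoly) : bool :=
  all (fun i => hsum (hterms p q i) (nth Z es i))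
      (iota 0 (size es + size (val p) + size (val q))).

Lemma checksP e p q : reflect (in_hprod e p q) (checks (val e) p q).
Proof.
apply: (iffP allP) => [epq i | epq i _]; last exact: epq.
case: (ltnP i (size (val e) + size (val p) + size (val q))) => hi.
  by apply: epq; rewrite mem_iota.
rewrite /coef nth_default; last lia.
rewrite (@hsum_eq _ [::]) // => x x0; apply/negP => /(hterms_support x0) [k [kp kq] _].
by have := deg_lt_size p; have := deg_lt_size q; lia.
Qed.

Lemma in_hprod_short e f q : deg f <= 2 ->
  hsum [:: smul (coef f 0) (coef q 0)] (coef e 0) ->
  hsum [:: smul (coef f 0) (coef q 1); smul (coef f 1) (coef q 0)] (coef e 1) ->
  (forall j, hsum [:: smul (coef f 0) (coef q j.+2); smul (coef f 1) (coef q j.+1);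
                     smul (coef f 2) (coef q j)] (coef e j.+2)) ->
  in_hprod e f q.
Proof.
move=> f2 h0 h1 h2 [|[|j]] //; apply: etrans (h2 j); apply: hsum_eq => x x0.
rewrite /hterms /= !subSS !subn0 !in_cons; congr [|| _, _, _ | _].
apply/mapP => -[k]; rewrite mem_iota => k3 ex; move: x0.
by rewrite ex coef_gt //; lia.
Qed.

Lemma poly_with_coefs (g : nat -> sgn) d : g d != Z ->
  exists2 q, deg q = d & forall i, i <= d -> coef q i = g i.
Proof.
move=> gd; have last_neq0 : last Z (mkseq g d.+1) != Z.
  by rewrite -(nth_last Z) size_mkseq nth_mkseq.
exists (exist _ (mkseq g d.+1) last_neq0); first by rewrite /deg size_mkseq.
by move=> i id; rewrite /coef nth_mkseq.
Qed.

Definition alt (a : sgn) (i : nat) : sgn := if odd i then neg a else a.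

Lemma alt_neq0 a i : a != Z -> alt a i != Z.
Proof. by rewrite /alt; case: (odd i); case: a. Qed.

Definition pT2T1 : spoly := @mkpoly [:: P; P; P] isT.

(* The four factorisations of a polynomial p of degree n > 0 with c_0 = a.
   If a = 0 then p is in T (c_1 + c_2 T + ... + c_n T^(n-1)). *)
Lemma hprod_T p d : coef p 0 = Z -> deg p = d.+1 ->
  exists2 q, deg q = d & in_hprod p pT q.
Proof.
move=> p0 dp; have gd : coef p d.+1 != Z by rewrite -dp coef_deg_neq0.
have [q dq qE] := @poly_with_coefs (fun i => coef p i.+1) d gd.
exists q => //; have {}qE i : coef q i = coef p i.+1.
  by case: (leqP i d) => hi; [rewrite qE | rewrite !coef_gt ?dq ?dp].
apply: in_hprod_short => [//|||j]; rewrite !qE /=.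
- by rewrite p0.
- by case: (coef p 1).
- by case: (coef p j.+2).
Qed.

(* If c_n = -a then p is in (T - 1) (-a - a T - ... - a T^(n-1)). *)
Lemma hprod_Tm1 p a d : coef p 0 = a -> coef p d.+1 = neg a -> deg p = d.+1 ->
  exists2 q, deg q = d & in_hprod p pTm1 q.
Proof.
move=> p0 pn dp.
have a0 : a != Z by move: (coef_deg_neq0 p); rewrite dp pn; case: (a).
have gd : neg a != Z by case: (a) a0.
have [q dq qE] := @poly_with_coefs (fun _ => neg a) d gd.
exists q => //; apply: in_hprod_short => [//|||j].
- by rewrite p0 qE //; case: (a) a0.
- case: d pn dp dq qE {gd} => [|d] pn dp dq qE.
    by rewrite pn [coef q 1]coef_gt ?dq ?qE //; case: (a) a0.
  by apply: hsum_full; rewrite !qE //; case: (a) a0.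
- case: (ltngtP j.+2 d.+1) => hj.
  + by apply: hsum_full; rewrite !qE; try lia; case: (a) a0.
  + rewrite [coef p _]coef_gt ?dp //.
    by rewrite [coef q j.+2]coef_gt ?[coef q j.+1]coef_gt ?dq //; lia.
  + case: hj => hd; rewrite -{}hd in pn dq qE.
    by rewrite pn [coef q j.+2]coef_gt ?dq ?qE //; case: (a) a0.
Qed.

(* If c_n = a and n is odd then p is in (T + 1) (a - a T + ... + a T^(n-1)). *)
Lemma hprod_Tp1 p a d : coef p 0 = a -> coef p d.+1 = a -> deg p = d.+1 ->
  ~~ odd d -> exists2 q, deg q = d & in_hprod p pTp1 q.
Proof.
move=> p0 pn dp ed.
have a0 : a != Z by move: (coef_deg_neq0 p); rewrite dp pn.
have [q dq qE] := poly_with_coefs (alt_neq0 d a0).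
exists q => //; apply: in_hprod_short => [//|||j].
- by rewrite p0 qE //; case: (a) a0.
- case: d pn dp ed dq qE => [|d] pn dp ed dq qE.
    by rewrite pn [coef q 1]coef_gt ?dq ?qE //; case: (a) a0.
  by apply: hsum_full; rewrite !qE //; case: (a) a0.
- case: (ltngtP j.+2 d.+1) => hj.
  + apply: hsum_full; rewrite !qE; try lia;
      by rewrite /alt /=; case: (odd j); case: (a) a0.
  + rewrite [coef p _]coef_gt ?dp //.
    by rewrite [coef q j.+2]coef_gt ?[coef q j.+1]coef_gt ?dq //; lia.
  + case: hj => hd; rewrite -{}hd in pn dq qE ed.
    by rewrite pn [coef q j.+2]coef_gt ?dq ?qE // /alt (negbTE ed); case: (a) a0.
Qed.

(* If c_n = a and n >= 4 is even then p is in (T^2 + T + 1) q, where q has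
   alternating signs a, -a, ..., a and degree n - 2. *)
Lemma hprod_T2T1 p a d : coef p 0 = a -> coef p d.+2 = a -> deg p = d.+2 ->
  ~~ odd d -> 0 < d -> exists2 q, deg q = d & in_hprod p pT2T1 q.
Proof.
move=> p0 pn dp ed d0.
have a0 : a != Z by move: (coef_deg_neq0 p); rewrite dp pn.
have [q dq qE] := poly_with_coefs (alt_neq0 d a0).
exists q => //; apply: in_hprod_short => [//|||j].
- by rewrite p0 qE //; case: (a) a0.
- by apply: hsum_full; rewrite !qE //; case: (a) a0.
- case: (ltngtP j.+1 d) => hj.
  + apply: hsum_full; rewrite !qE; try lia;
      by rewrite /alt /=; case: (odd j); case: (a) a0.
  + case: (ltngtP j d) => hj'; first lia.
      by rewrite [coef p _]coef_gt ?dp // ![coef q _]coef_gt ?dq //; lia.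
    subst j; rewrite pn [coef q d.+2]coef_gt ?[coef q d.+1]coef_gt ?dq ?qE //.
    by rewrite /alt (negbTE ed); case: (a) a0.
  + apply: hsum_full; rewrite [coef q j.+2]coef_gt ?dq ?qE; try lia;
      by rewrite /alt /=; case: (odd j); case: (a) a0.
Qed.

Lemma factor_large p : 2 < deg p ->
  exists q1 q2, [/\ 0 < deg q1, 0 < deg q2 & in_hprod p q1 q2].
Proof.
move=> p3; have [d dp] : exists d, deg p = d.+1 by exists (deg p).-1; lia.
case: (coef p 0 =P Z) => [p0 | /eqP a0].
  by have [q dq pq] := hprod_T p0 dp; exists pT, q; split => //; lia.
have [pn|pn] : coef p d.+1 = neg (coef p 0) \/ coef p d.+1 = coef p 0.
  by move: (coef_deg_neq0 p) a0; rewrite dp; case: (coef p 0); case: (coef p _); auto.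
  by have [q dq pq] := hprod_Tm1 erefl pn dp; exists pTm1, q; split => //; lia.
have [od | ed] := boolP (odd d).
  have ed' : ~~ odd d.-1 by case: d {dp p3 pn} od.
  have d1 : 0 < d.-1 by lia.
  have d0 : 0 < d by lia.
  rewrite -(prednK d0) in pn dp.
  have [q dq pq] := hprod_T2T1 erefl pn dp ed' d1.
  by exists pT2T1, q; split => //; lia.
by have [q dq pq] := hprod_Tp1 erefl pn dp ed; exists pTp1, q; split => //; lia.
Qed.

Definition linears : seq spoly :=
  [:: @mkpoly [:: Z; P] isT; @mkpoly [:: Z; N] isT; @mkpoly [:: P; P] isT;
      @mkpoly [:: P; N] isT; @mkpoly [:: N; P] isT; @mkpoly [:: N; N] isT].

Lemma linearsP q : (q \in linears) = (deg q == 1).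
Proof.
apply/idP/eqP => [|].
  by have : all (fun q => deg q == 1) linears by []; move/allP/(_ q) => h /h /eqP.
by case: q => [[|a [|b [|c s]]] h] //; rewrite /deg //= => _; case: b h; case: a.
Qed.

Definition irr_seqs : seq (seq sgn) :=
  [:: [:: Z; P]; [:: Z; N]; [:: N; P]; [:: P; N]; [:: P; P]; [:: N; N];
      [:: P; Z; P]; [:: N; Z; N]].

Lemma deg2_cases c0 c1 c2 : c2 != Z -> ([:: c0; c1; c2] \in irr_seqs) ||
  has (fun q1 => has (checks [:: c0; c1; c2] q1) linears) linears.
Proof. by case: c0; case: c1; case: c2; vm_compute. Qed.

Lemma factor_small p : 0 < deg p <= 2 -> val p \in irr_seqs \/
  exists q1 q2, [/\ 0 < deg q1, 0 < deg q2 & in_hprod p q1 q2].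
Proof.
case: p => [[|c0 [|c1 [|c2 [|c3 s]]]] h] //; rewrite {1}/deg /= => // _.
  by left; case: c1 h; case: c0.
case/orP: (@deg2_cases c0 c1 c2 h) => [|/hasP [q1 q1l /hasP [q2 q2l pq]]].
  by left.
move/(@checksP (exist _ [:: c0; c1; c2] h)): pq => pq.
by right; exists q1, q2; move: q1l q2l; rewrite !linearsP => /eqP -> /eqP ->.
Qed.

Lemma assoc_deg p q : assoc p q -> deg p = deg q.
Proof. by case=> /deg_hprod. Qed.

Lemma irreducible_irr_seqs p : irreducible p -> val p \in irr_seqs.
Proof.
case=> p1 irr.
have no_factor :
    (exists q1 q2, [/\ 0 < deg q1, 0 < deg q2 & in_hprod p q1 q2]) -> False.
  move=> [q1 [q2 [d1 d2 pq]]]; have := deg_hprod pq.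
  by case: (irr _ _ pq) => /assoc_deg; lia.
case: (leqP (deg p) 2) => p2; last by case: no_factor; exact: factor_large.
by case: (@factor_small p) => [|//|/no_factor //]; rewrite p1.
Qed.

(* A polynomial of positive degree without factorisation into two factors of
   positive degree is irreducible, the constants being the units +-1. *)
Lemma irreducible_no_factor p : 0 < deg p ->
  (forall q1 q2, in_hprod p q1 q2 -> 0 < deg q1 -> 0 < deg q2 -> False) ->
  irreducible p.
Proof.
move=> p1 no_factor; split => // q1 q2 pq.
case: (posnP (deg q1)) => d1.
  by right; case: (deg0 d1) => q1E; rewrite q1E in pq; [left | right].
case: (posnP (deg q2)) => d2.
  by left; move/in_hprodC: pq; case: (deg0 d2) => ->; [left | right].
by case: (no_factor _ _ pq d1 d2).
Qed.

Lemma irreducible_deg1 p : deg p = 1 -> irreducible p.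
Proof.
move=> p1; apply: irreducible_no_factor => [|q1 q2 /deg_hprod]; rewrite p1 //; lia.
Qed.

Lemma irreducible_T2p1 : irreducible pT2p1.
Proof.
apply: irreducible_no_factor => // q1 q2 pq d1 d2.
have /andP [q1l q2l] : (q1 \in linears) && (q2 \in linears).
  by rewrite !linearsP; have := deg_hprod pq; rewrite (_ : deg pT2p1 = 2) //; lia.
have : ~~ has (fun q1 => has (checks (val pT2p1) q1) linears) linears by vm_compute.
by move/hasPn/(_ q1 q1l)/hasPn/(_ q2 q2l)/checksP.
Qed.

Definition monic_irr : seq spoly := [:: pT; pTm1; pTp1; pT2p1].

Lemma irr_seqs_monic : [seq s <- irr_seqs | last Z s == P] = map val monic_irr.
Proof. by []. Qed.

Lemma irr_seqs_assoc : all (fun s =>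
  has (fun q => checks s pone q || checks s pmone q) monic_irr) irr_seqs.
Proof. by vm_compute. Qed.

Theorem mainTheorem9 :
  (forall p : spoly, monic p ->
     (irreducible p <-> [\/ p = pT, p = pTm1, p = pTp1 | p = pT2p1])) /\
  (forall p : spoly, irreducible p ->
     [\/ assoc p pT, assoc p pTm1, assoc p pTp1 | assoc p pT2p1]).
Proof.
split=> [p mp | p /irreducible_irr_seqs /(allP irr_seqs_assoc) /hasP [q qm pq]].
  split=> [/irreducible_irr_seqs ip | ].
    have : p \in monic_irr.
      by rewrite -(mem_map val_inj) -irr_seqs_monic mem_filter -coef_deg_last mp eqxx.
    by rewrite !inE => /or4P [] /eqP ->;
      [exact: Or41 | exact: Or42 | exact: Or43 | exact: Or44].
  by case=> ->; do ?[exact: irreducible_T2p1 | exact: irreducible_deg1].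
have apq : assoc p q by case/orP: pq => /checksP; [left | right].
by move: qm; rewrite !inE => /or4P [] /eqP qE; rewrite -qE;
  [exact: Or41 | exact: Or42 | exact: Or43 | exact: Or44].
Qed.
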